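(* In the setting described in the context, if $(g\circ h^a)_\sharp\mu=\mu$ for some $g\in\mathcal{G}$ and $a>0$, then $g_\star\nu=\nu$.
   Context: Let $(\mathcal{X},\Sigma)$ be a measurable space, $\Phi^t$ a flow on $\mathcal{X}$ (bijective measurable maps, $\Phi^{t_1}\circ\Phi^{t_2}=\Phi^{t_1+t_2}$, jointly measurable), $f_\sharp$ push-forward, $\mu$ an invariant probability measure ($\Phi^t_\sharp\mu=\mu$ for all $t$). Let $h^a$, $a>0$, be bijective measurable maps and $\mathcal{G}$ a group of bijective measurable maps of $\mathcal{X}$ with $h^{a_1}\circ h^{a_2}=h^{a_1a_2}$, $\Phi^t\circ g=g\circ\Phi^t$, $g\circ h^a=h^a\circ g$, $\Phi^t\circ h^a=h^a\circ\Phi^{t/a}$. $\mathcal{Y}\subset\mathcal{X}$ is a representative set: for every $x$ there is a unique $a=A(x)>0$ with $h^a(x)\in\mathcal{Y}$, $A$ measurable with $\int A\,d\mu<\infty$; $P(x)=h^{A(x)}(x)$. Standing assumption: $\int A\circ g\,d\mu<\infty$ for every $g\in\mathcal{G}$. For a measure $\rho$ and positive measurable $B$ with $0<\int B\,d\rho<\infty$, $\rho_B$ is the probability measure with $d\rho_B/d\rho=B/\int B\,d\rho$. $\nu=P_\sharp\mu_A$, and for $g\in\mathcal{G}$, $g_\star\nu=P_\sharp\big((g_\sharp\mu)_A\big)$ is the normalized measure associated with $g_\sharp\mu$ (equivalently $g_\star\nu=(P\circ g)_\sharp\nu_{A\circ g}$). *)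

From HB Require Import structures.
From mathcomp Require Import all_boot all_order all_algebra.
From mathcomp Require Import all_classical all_reals all_analysis.
Set Implicit Arguments. Unset Strict Implicit. Unset Printing Implicit Defensive.
Import Order.TTheory GRing.Theory Num.Theory.
Local Open Scope classical_set_scope.
Local Open Scope ring_scope.

(* Meaningful when
   0 < \int B d rho < +oo (which is assumed wherever it is used). *)
Definition normalized d (X : measurableType d) (R : realType)
  (rho : set X -> \bar R) (B : X -> R) : set X -> \bar R :=
  fun S => ((\int[rho]_(x in S) (B x)%:E) *
            ((fine (\int[rho]_x (B x)%:E))^-1)%:E)%E.

Definition reprP d (X : measurableType d) (R : realType)
  (h : R -> X -> X) (A : X -> R) : X -> X := fun x => h (A x) x.

Definition nu_of d (X : measurableType d) (R : realType)
  (mu : set X -> \bar R) (h : R -> X -> X) (A : X -> R) : set X -> \bar R :=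
  pushforward (normalized mu A) (reprP h A).

Definition gstar d (X : measurableType d) (R : realType)
  (mu : set X -> \bar R) (h : R -> X -> X) (A : X -> R) (g : X -> X)
  : set X -> \bar R :=
  pushforward (normalized (pushforward mu g) A) (reprP h A).

From HB Require Import structures.
From mathcomp Require Import all_boot all_order all_algebra.
From mathcomp Require Import all_classical all_reals all_analysis.
From mathcomp Require Import measurable_realfun.
Set Implicit Arguments.
Unset Strict Implicit.
Unset Printing Implicit Defensive.

Import Order.TTheory GRing.Theory Num.Theory.
Local Open Scope classical_set_scope.
Local Open Scope ring_scope.

(* Since g \o h^a preserves mu and A (h^a y) = A y / a, the measure g_# mu
   integrates A over every h^a-invariant set exactly a times as much as mu
   does.  The preimages under P are h^a-invariant (P \o h^a = P), and so is
   the whole space, so the factor a cancels in the normalization. *)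

Section pushforward_homogeneous.
Context d (X : measurableType d) (R : realType) (mu : measure X R).
Variables (g k : X -> X) (B : X -> R) (c : R).
Hypotheses (mg : measurable_fun setT g) (mk : measurable_fun setT k).
Hypotheses (gk : g \o k = k \o g)
  (mu_gk : forall S, measurable S -> pushforward mu (g \o k) S = mu S).
Hypotheses (c_gt0 : 0 < c) (B_ge0 : forall x, 0 <= B x)
  (mB : measurable_fun setT B) (Bk : forall x, B (k x) * c = B x).

Lemma integral_pushforward_homogeneous (T : set X) :
  measurable T -> k @^-1` T = T ->
  (\int[pushforward mu g]_(x in T) (B x)%:E =
   c%:E * \int[mu]_(x in T) (B x)%:E)%E.
Proof.
move=> mT kT.
have mBT : measurable_fun T (EFin \o B).
  by apply/measurable_EFinP; exact: measurable_funTS.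
have BT_ge0 : {in T, forall x, (0 <= (B x)%:E)%E} by move=> x _; rewrite lee_fin.
have mgT : measurable (g @^-1` T) by rewrite -[_ @^-1` _]setTI; exact: mg.
have mgk : measurable_fun setT (g \o k) by exact: measurableT_comp.
have -> : (\int[mu]_(x in T) (B x)%:E =
           c^-1%:E * \int[pushforward mu g]_(x in T) (B x)%:E)%E.
  rewrite (@eq_measure_integral _ _ _ T (pushforward mu (g \o k)) mu); last first.
    by move=> S mS _; symmetry; apply: mu_gk.
  rewrite (ge0_integral_pushforward mgk mu mT mBT BT_ge0).
  rewrite (ge0_integral_pushforward mg mu mT mBT BT_ge0).
  have mBg : measurable_fun (g @^-1` T) (EFin \o B \o g).
    by apply/measurable_EFinP; apply: measurable_funTS; exact: measurableT_comp.
  have Bg_ge0 x : (g @^-1` T) x -> (0 <= (EFin \o B \o g) x)%E.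
    by move=> _; rewrite lee_fin.
  have cV_ge0 : 0 <= c^-1 by rewrite invr_ge0 ltW.
  rewrite -(ge0_integralZl_EFin mu mgT Bg_ge0 mBg cV_ge0).
  rewrite gk comp_preimage kT; apply: eq_integral => x _ /=.
  by rewrite -EFinM -(Bk (g x)) mulrC mulfK ?gt_eqF.
by rewrite muleA -EFinM mulfV ?gt_eqF // mul1e.
Qed.
End pushforward_homogeneous.

Lemma normalized_eq_scale d (X : measurableType d) (R : realType)
    (rho rho' : set X -> \bar R) (B : X -> R) (c : R) (S : set X) :
  c != 0 -> (\int[rho]_x (B x)%:E \is a fin_num)%E ->
  (\int[rho']_(x in S) (B x)%:E = c%:E * \int[rho]_(x in S) (B x)%:E)%E ->
  (\int[rho']_x (B x)%:E = c%:E * \int[rho]_x (B x)%:E)%E ->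
  normalized rho' B S = normalized rho B S.
Proof.
rewrite /normalized => c_neq0 /fineK <- -> ->.
rewrite -EFinM /= invfM EFinM (muleC c%:E) -muleA -(EFinM c^-1) -EFinM.
by rewrite mulVKf.
Qed.

Section representative_set.
Context d (X : measurableType d) (R : realType).
Variables (h : R -> X -> X) (Y : set X) (A : X -> R).
Hypotheses (h_mul : forall a1 a2, 0 < a1 -> 0 < a2 -> h a1 \o h a2 = h (a1 * a2)).
Hypotheses (A_pos : forall x, 0 < A x) (A_Y : forall x, Y (h (A x) x))
  (A_uniq : forall x a, 0 < a -> Y (h a x) -> a = A x).

Lemma A_h (a : R) : 0 < a -> forall y, A (h a y) * a = A y.
Proof.
move=> a_gt0 y; apply: A_uniq; first by rewrite mulr_gt0.
by rewrite -(h_mul (A_pos _) a_gt0); exact: A_Y.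
Qed.

Lemma reprP_h (a : R) : 0 < a -> reprP h A \o h a = reprP h A.
Proof.
move=> a_gt0; apply/funext => y.
by rewrite /reprP /= -(A_h a_gt0 y) -(h_mul (A_pos _) a_gt0).
Qed.
End representative_set.

Theorem corollary2 (d : measure_display) (X : measurableType d) (R : realType)
  (Phi : R -> X -> X) (mu : probability X R)
  (h : R -> X -> X) (G : set (X -> X)) (Y : set X) (A : X -> R)
  (* flow *)
  (Phi_bij : forall t, bijective (Phi t))
  (Phi_meas : forall t, measurable_fun setT (Phi t))
  (Phi_add : forall t1 t2, Phi t1 \o Phi t2 = Phi (t1 + t2))
  (Phi_joint : measurable_fun setT (fun p : R * X => Phi p.1 p.2))
  (* invariance of mu *)
  (mu_inv : forall t S, measurable S -> pushforward mu (Phi t) S = mu S)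
  (* the maps h^a, a > 0 *)
  (h_bij : forall a, 0 < a -> bijective (h a))
  (h_meas : forall a, 0 < a -> measurable_fun setT (h a))
  (h_mul : forall a1 a2, 0 < a1 -> 0 < a2 -> h a1 \o h a2 = h (a1 * a2))
  (* the group G *)
  (G_id : G id)
  (G_comp : forall g1 g2, G g1 -> G g2 -> G (g1 \o g2))
  (G_inv : forall g, G g -> exists2 g', G g' & cancel g g' /\ cancel g' g)
  (G_meas : forall g, G g -> measurable_fun setT g)
  (* commutation relations *)
  (Phi_g : forall t g, G g -> Phi t \o g = g \o Phi t)
  (g_h : forall g a, G g -> 0 < a -> g \o h a = h a \o g)
  (Phi_h : forall t a, 0 < a -> Phi t \o h a = h a \o Phi (t / a))
  (* Y is a representative set, A(x) the unique a > 0 with h^a(x) in Y *)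
  (A_pos : forall x, 0 < A x)
  (A_Y : forall x, Y (h (A x) x))
  (A_uniq : forall x a, 0 < a -> Y (h a x) -> a = A x)
  (A_meas : measurable_fun setT A)
  (A_int : (\int[mu]_x (A x)%:E < +oo)%E)
  (* P is measurable (implicit in P_# ) *)
  (P_meas : measurable_fun setT (reprP h A))
  (* standing assumption *)
  (AG_int : forall g, G g -> (\int[mu]_x (A (g x))%:E < +oo)%E) :
  forall (g : X -> X) (a : R), G g -> 0 < a ->
  (forall S, measurable S -> pushforward mu (g \o h a) S = mu S) ->
  forall S, measurable S -> gstar mu h A g S = nu_of mu h A S.
Proof.
move=> g a Gg a_gt0 mu_gh S mS.
have A_ge0 x : 0 <= A x by exact/ltW.
have gmuA := integral_pushforward_homogeneous (G_meas _ Gg) (h_meas _ a_gt0)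
  (g_h _ _ Gg a_gt0) mu_gh a_gt0 A_ge0 A_meas (A_h h_mul A_pos A_Y A_uniq a_gt0).
apply: (normalized_eq_scale (c := a)).
- by rewrite gt_eqF.
- by rewrite ge0_fin_numE // integral_ge0 // => x _; rewrite lee_fin.
- apply: gmuA; first by rewrite -[_ @^-1` _]setTI; exact: P_meas.
  by rewrite -comp_preimage (reprP_h h_mul A_pos A_Y A_uniq a_gt0).
- exact: gmuA.
Qed.
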